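(* Property (A) holds if and only if there exists a map $M\colon\mathbb R^n\to\mathbb R^{n\times n}$ such that $f(z)=M(z)\eta(z)$ and $M(z)\preceq 0$ for all $z\in\mathbb R^n$. Moreover, property (A) holds if all of the following hold: - $f$ and $\eta$ are continuously differentiable; - $\eta\colon\mathbb R^n\to\mathbb R^n$ is bijective; - $f(\eta^{-1}(0))=0$; - $D\eta(z)$ is invertible for all $z\in\mathbb R^n$; - $Df(z)\,D\eta(z)^{-1}\preceq 0$ for all $z\in\mathbb R^n$.
   Context: Setting. Let $n,m$ be positive integers. Let $\mathcal H\colon\mathbb R^n\to\mathbb R$ be continuously differentiable with $\mathcal H\ge 0$, and set $\eta\coloneq\nabla\mathcal H\colon\mathbb R^n\to\mathbb R^n$. Let $f\colon\mathbb R^n\to\mathbb R^n$ and $B\colon\mathbb R^n\to\mathbb R^{n\times m}$. Consider the system $\dot z = f(z)+B(z)u$, $y=B(z)^{\mathsf T}\eta(z)$. Notation. For a square matrix $A$ (not necessarily symmetric), $A\preceq 0$ means $x^{\mathsf T}Ax\le 0$ for all $x\in\mathbb R^n$. $Dg(z)$ denotes the Jacobian of $g$ at $z$. Property (A): there exist maps $J,R\colon\mathbb R^n\to\mathbb R^{n\times n}$ such that, for all $z\in\mathbb R^n$, $J(z)=-J(z)^{\mathsf T}$, $R(z)=R(z)^{\mathsf T}$ is positive semidefinite, and $f(z)=(J(z)-R(z))\eta(z)$. *)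

(* Vectors of R^n are row vectors 'rV[R]_n
   (the convention of the library's Jacobian 'J); column-vector identities of the
   paper are written with explicit transposes. *)
From HB Require Import structures.
From mathcomp Require Import all_boot all_order all_algebra.
From mathcomp Require Import all_classical all_reals.
From mathcomp Require Import topology normedtype derive.
Set Implicit Arguments. Unset Strict Implicit. Unset Printing Implicit Defensive.
Import Order.TTheory GRing.Theory Num.Theory.
Import numFieldNormedType.Exports.
Local Open Scope ring_scope.

(* A ⪯ 0 : x^T A x <= 0 for all x (A not necessarily symmetric). *)
Definition nsd (R : realType) (n : nat) (A : 'M[R]_n) : Prop :=
  forall x : 'cV[R]_n, (x^T *m A *m x) 0 0 <= 0.

(* A positive semidefinite (symmetry imposed separately). *)
Definition psd (R : realType) (n : nat) (A : 'M[R]_n) : Prop :=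
  forall x : 'cV[R]_n, 0 <= (x^T *m A *m x) 0 0.

Definition gradient (R : realType) (n : nat) (H : 'rV[R]_n -> R) (z : 'rV[R]_n)
  : 'rV[R]_n := \row_i ('d H z (delta_mx 0 i)).

(* The (usual, column-convention) Jacobian matrix Dg(z): entry (i,j) = d g_i / d z_j.
   The library's 'J g z is its transpose (row-vector convention). *)
Definition Jac (R : realType) (n : nat) (g : 'rV[R]_n -> 'rV[R]_n) (z : 'rV[R]_n)
  : 'M[R]_n := ('J g z)^T.

Definition C1_scalar (R : realType) (n : nat) (H : 'rV[R]_n -> R) : Prop :=
  (forall z, differentiable H z) /\ continuous (gradient H).

Definition C1_map (R : realType) (n : nat) (g : 'rV[R]_n -> 'rV[R]_n) : Prop :=
  (forall z, differentiable g z) /\ continuous (fun z => 'J g z).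

Definition propertyA (R : realType) (n : nat) (f eta : 'rV[R]_n -> 'rV[R]_n) : Prop :=
  exists J Rm : 'rV[R]_n -> 'M[R]_n,
    forall z, (J z)^T = - J z /\ (Rm z)^T = Rm z /\ psd (Rm z) /\
              (f z)^T = (J z - Rm z) *m (eta z)^T.

From HB Require Import structures.
From mathcomp Require Import all_boot all_order all_algebra.
From mathcomp Require Import all_classical all_reals.
From mathcomp Require Import topology normedtype derive landau.
From mathcomp Require Import lra.
Import Order.TTheory GRing.Theory Num.Theory.
Import numFieldNormedType.Exports.
Local Open Scope ring_scope.
Local Open Scope classical_set_scope.

(* For the equivalence, the quadratic form of [J - R] is that of [-R], and
   conversely the skew and symmetric parts of [M ⪯ 0] provide [J] and [R].
   For the sufficient condition it is enough, by a rank-two construction of [M],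
   that [<eta z, f z> <= 0] for all [z].  Let [g] be the inverse of [eta] and
   [w = eta z]: the map [s |-> <w, f (g (s w))>] has derivative
   [<w, w (D eta)^-1 D f>] (row-vector convention), which is nonpositive by the
   hypothesis on [D f (D eta)^-1], and it vanishes at [s = 0] since [f] is zero
   where [eta] is, so it is nonpositive at [s = 1].  That [g] is differentiable
   along lines is shown directly: a minimiser of [|eta - y|^2] inside a ball
   solves [eta x = y] because [D eta] is invertible, which gives the continuity
   of [g], and inverting the first-order expansion of [eta] then gives its
   derivative. *)

Section QuadraticForms.
Context {R : realType} {n : nat}.
Implicit Types (A B M S : 'M[R]_n) (x : 'cV[R]_n).

Definition qform A x := (x^T *m A *m x) 0 0.

Lemma qform_tr A x : qform A^T x = qform A x.
Proof.
rewrite /qform; have <- : (x^T *m A *m x)^T = x^T *m A^T *m x.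
  by rewrite !trmx_mul trmxK mulmxA.
by rewrite mxE.
Qed.

Lemma qformD A B x : qform (A + B) x = qform A x + qform B x.
Proof. by rewrite /qform mulmxDr mulmxDl mxE. Qed.

Lemma qformN A x : qform (- A) x = - qform A x.
Proof. by rewrite /qform mulmxN mulNmx mxE. Qed.

Lemma qformZ c A x : qform (c *: A) x = c * qform A x.
Proof. by rewrite /qform -scalemxAr -scalemxAl mxE. Qed.

Lemma qform_skew A x : A^T = - A -> qform A x = 0.
Proof. by move=> skewA; have := qform_tr A x; rewrite skewA qformN; lra. Qed.

Lemma qform_outer (a b : 'cV[R]_n) x :
  qform (a *m b^T) x = (x^T *m a) 0 0 * (x^T *m b) 0 0.
Proof.
rewrite /qform mulmxA -mulmxA [x^T *m a]mx11_scalar mul_scalar_mx mxE.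
congr (_ * _); first by rewrite [RHS]mxE eqxx mulr1n.
have <- : (x^T *m b)^T = b^T *m x by rewrite trmx_mul trmxK.
by rewrite mxE.
Qed.

Lemma nsd_skew_subr_psd A S : A^T = - A -> psd S -> nsd (A - S).
Proof.
move=> skewA psdS x; rewrite -/(qform _ x) qformD qform_skew // qformN.
by rewrite add0r oppr_le0; exact: psdS.
Qed.

Definition skew_part M := (2^-1 : R) *: (M - M^T).
Definition sym_part M := (2^-1 : R) *: (M + M^T).

Lemma skew_partT M : (skew_part M)^T = - skew_part M.
Proof. by rewrite /skew_part linearZ /= linearB /= trmxK -scalerN opprB. Qed.

Lemma sym_partT M : (sym_part M)^T = sym_part M.
Proof. by rewrite /sym_part linearZ /= linearD /= trmxK addrC. Qed.

Lemma skew_part_add_sym M : skew_part M + sym_part M = M.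
Proof.
rewrite /skew_part /sym_part -scalerDr addrACA addNr addr0 -mulr2n.
by rewrite -[M *+ 2]scaler_nat scalerA mulVf ?pnatr_eq0 // scale1r.
Qed.

Lemma qform_sym_part M x : qform (sym_part M) x = qform M x.
Proof. by rewrite /sym_part qformZ qformD qform_tr; lra. Qed.

Lemma psd_opp_sym_part M : nsd M -> psd (- sym_part M).
Proof.
by move=> nsdM x; rewrite -/(qform _ x) qformN qform_sym_part oppr_ge0; exact: nsdM.
Qed.

End QuadraticForms.

Lemma propertyA_nsdP (R : realType) (n : nat) (f eta : 'rV[R]_n -> 'rV[R]_n) :
  propertyA f eta <->
  exists M : 'rV[R]_n -> 'M[R]_n,
    forall z, (f z)^T = M z *m (eta z)^T /\ nsd (M z).
Proof.
split=> [[J [S JS]]|[M fM]].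
  exists (fun z => J z - S z) => z; have [skewJ [_ [psdS fE]]] := JS z.
  by split=> //; exact: nsd_skew_subr_psd.
exists (fun z => skew_part (M z)), (fun z => - sym_part (M z)) => z.
have [fE nsdM] := fM z; split; first exact: skew_partT.
split; first by rewrite linearN /= sym_partT.
by split; [exact: psd_opp_sym_part | rewrite opprK skew_part_add_sym].
Qed.

Section InnerProduct.
Context {R : realType} {n : nat}.
Implicit Types (u v w : 'rV[R]_n).

Definition dotv u v : R := \sum_i u 0 i * v 0 i.

Lemma dotvC u v : dotv u v = dotv v u.
Proof. by apply: eq_bigr => i _; rewrite mulrC. Qed.

Lemma dotv_mulmx u v : (u *m v^T) 0 0 = dotv u v.
Proof. by rewrite mxE; apply: eq_bigr => i _; rewrite mxE. Qed.

Lemma dotv0r u : dotv u 0 = 0.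
Proof. by rewrite /dotv big1 // => i _; rewrite mxE mulr0. Qed.

Lemma dotvNr u v : dotv u (- v) = - dotv u v.
Proof. by rewrite /dotv -sumrN; apply: eq_bigr => i _; rewrite mxE mulrN. Qed.

Lemma dotvv_ge0 u : 0 <= dotv u u.
Proof. by apply: sumr_ge0 => i _; rewrite -expr2 sqr_ge0. Qed.

Lemma dotvv_eq0 u : (dotv u u == 0) = (u == 0).
Proof.
apply/idP/eqP => [|->]; last by rewrite dotv0r.
rewrite psumr_eq0 => [/allP u0|i _]; last by rewrite -expr2 sqr_ge0.
apply/matrixP => i j; rewrite (ord1 i) mxE.
by have := u0 j (mem_index_enum _); rewrite -expr2 sqrf_eq0 => /eqP.
Qed.

Lemma dotvv_gt0 u : u != 0 -> 0 < dotv u u.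
Proof. by move=> u0; rewrite lt_def dotvv_eq0 u0 dotvv_ge0. Qed.

Lemma dotvvN u : dotv (- u) (- u) = dotv u u.
Proof. by apply: eq_bigr => i _; rewrite !mxE mulrNN. Qed.

Lemma dotvvD_le u v : dotv (u + v) (u + v) <= 2 * dotv u u + 2 * dotv v v.
Proof.
rewrite /dotv !mulr_sumr -big_split /=; apply: ler_sum => i _; rewrite !mxE.
by have := sqr_ge0 (u 0 i - v 0 i); rewrite !expr2; lra.
Qed.

(* With [s = <w,w>] and [c = <w,v>], the skew part sends [w] to
   [v - (c/s) w] and the rank-one part adds back [(c/s) w]; only the rank-one
   part contributes to the quadratic form, with the sign of [c]. *)
Lemma nsd_factor {w v} : dotv w v <= 0 -> (w = 0 -> v = 0) ->
  exists M : 'M[R]_n, v^T = M *m w^T /\ nsd M.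
Proof.
move=> c_le0 w0v0; have [w0|w_neq0] := eqVneq w 0.
  exists 0; rewrite w0v0 // mul0mx trmx0; split=> // x.
  by rewrite mulmx0 mul0mx mxE.
set s := dotv w w; set c := dotv w v; have s_gt0 : 0 < s by exact: dotvv_gt0.
set W := w^T; set V := v^T.
have WW : W^T *m W = s%:M by rewrite [LHS]mx11_scalar /W trmxK dotv_mulmx.
have VW : V^T *m W = c%:M by rewrite [LHS]mx11_scalar /W /V trmxK dotv_mulmx dotvC.
exists (s^-1 *: (V *m W^T - W *m V^T) + (c / s^+2) *: (W *m W^T)); split.
  rewrite mulmxDl -!scalemxAl mulmxBl -!mulmxA WW VW !mul_mx_scalar.
  rewrite scalerBr !scalerA mulVf ?gt_eqF // scale1r -addrA -scaleNr -scalerDl.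
  have -> : - (s^-1 * c) + c / s ^+ 2 * s = 0.
    by rewrite expr2 invfM mulrA -mulrA mulVf ?gt_eqF // mulr1 mulrC addNr.
  by rewrite scale0r addr0.
move=> x; rewrite -/(qform _ x) qformD !qformZ qformD qformN !qform_outer.
rewrite [X in X - _]mulrC subrr mulr0 add0r.
apply: mulr_le0_ge0; last by rewrite -expr2 sqr_ge0.
by apply: mulr_le0_ge0 => //; rewrite invr_ge0 exprn_ge0 // ltW.
Qed.

Lemma dotv_nsd (A B : 'M[R]_n) w :
  nsd (B^T *m invmx A^T) -> dotv w (w *m invmx A *m B) <= 0.
Proof.
move=> /(_ w^T); rewrite trmxK dotvC -dotv_mulmx.
have -> : w *m invmx A *m B *m w^T = (w *m (B^T *m invmx A^T) *m w^T)^T.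
  by rewrite !trmx_mul !trmxK -trmx_inv trmxK !mulmxA.
by rewrite [in X in _ -> X]mxE.
Qed.

End InnerProduct.

Section Calculus.
Context {R : realType} {n : nat}.
Implicit Types (c : R -> 'rV[R]_n) (t : R) (u v w : 'rV[R]_n).

Lemma is_derive_coord {c t v} i :
  is_derive t 1 c v -> is_derive t 1 (fun s => c s 0 i) (v 0 i).
Proof.
move=> [dc <-]; have /derivable_mxP dci := dc.
by apply: DeriveDef; [exact: dci | rewrite (derive_mx dc) mxE].
Qed.

Lemma is_derive_jacobian {F : 'rV[R]_n -> 'rV[R]_n} {c t v} :
  differentiable F (c t) -> is_derive t 1 c v ->
  is_derive t 1 (F \o c) (v *m 'J F (c t)).
Proof.
move=> dF [dc <-]; have dc' : differentiable c t by apply/derivable1_diffP.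
have dFc : differentiable (F \o c) t by apply: differentiable_comp.
apply: DeriveDef; first exact/derivable1_diffP.
by rewrite deriveE // diff_comp //= -(deriveE _ dc') -deriveE // deriveEjacobian.
Qed.

Lemma is_derive_line u w t : is_derive t 1 (fun s : R => s *: u + w) u.
Proof.
have uw : is_diff t (fun s : R => s *: u + w) (( *:%R ^~ u) + 0) by exact: is_diffD.
apply: DeriveDef; first by apply/derivable1_diffP.
by rewrite deriveE // diff_val /= addr0 scale1r.
Qed.

Lemma is_derive_dotv w {c t v} :
  is_derive t 1 c v -> is_derive t 1 (fun s => dotv w (c s)) (dotv w v).
Proof.
move=> dc.
have -> : (fun s => dotv w (c s)) = \sum_(i < n) (fun s => w 0 i *: c s 0 i).
  by apply/funext => s; rewrite /dotv fct_sumE.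
have -> : dotv w v = \sum_(i < n) w 0 i *: v 0 i by [].
apply: is_derive_sum => i.
exact: is_deriveZ (is_derive_coord i dc).
Qed.

Lemma is_derive_dotvv {c t v} :
  is_derive t 1 c v -> is_derive t 1 (fun s => dotv (c s) (c s)) (2 * dotv (c t) v).
Proof.
move=> dc.
have -> : (fun s => dotv (c s) (c s)) =
    \sum_(i < n) ((fun s => c s 0 i) * (fun s => c s 0 i)).
  by apply/funext => s; rewrite /dotv fct_sumE.
have -> : 2 * dotv (c t) v = \sum_(i < n) (c t 0 i *: v 0 i + c t 0 i *: v 0 i).
  by rewrite /dotv mulr_sumr; apply: eq_bigr => i _; rewrite -mulr2n mulr_natl.
apply: is_derive_sum => i; have dci := is_derive_coord i dc.
exact: is_deriveM.
Qed.

Lemma differentiable_dotvv {V : normedModType R} {F : V -> 'rV[R]_n} {x} :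
  differentiable F x -> differentiable (fun y => dotv (F y) (F y)) x.
Proof.
move=> dF.
have -> : (fun y => dotv (F y) (F y)) =
    \sum_(i < n) ((fun y => F y 0 i) * (fun y => F y 0 i)).
  by apply/funext => y; rewrite /dotv fct_sumE.
apply: differentiable_sum => i.
have dFi : differentiable (fun y => F y 0 i) x.
  exact: (differentiable_comp dF (differentiable_coord _ _ _)).
exact: differentiableM.
Qed.

Lemma mx_norm_entry_le p q (M : 'M[R]_(p, q)) i j : `|M i j| <= `|M|.
Proof.
rewrite [leRHS]/Num.Def.normr /= mx_normrE.
by apply/bigmax_geP; right => /=; exists (i, j).
Qed.

Lemma mx_norm_le p q (M : 'M[R]_(p, q)) (b : R) :
  0 <= b -> (forall i j, `|M i j| <= b) -> `|M| <= b.
Proof.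
move=> b0 Mb; rewrite [leLHS]/Num.Def.normr /= mx_normrE.
by apply: bigmax_le => // -[i j] _ /=.
Qed.

Lemma mulmx_norm_bound (B : 'M[R]_n) :
  exists2 K, 0 < K & forall x : 'rV[R]_n, `|x *m B| <= K * `|x|.
Proof.
exists (1 + n%:R * `|B|); first by rewrite ltr_wpDr // mulr_ge0.
move=> x; apply: mx_norm_le => [|i j].
  by rewrite mulr_ge0 // addr_ge0 // mulr_ge0.
rewrite mxE; apply: le_trans (ler_norm_sum _ _ _) _.
apply: (@le_trans _ _ (\sum_(k < n) `|x| * `|B|)).
  apply: ler_sum => k _; rewrite normrM.
  by apply: ler_pM => //; exact: mx_norm_entry_le.
rewrite sumr_const card_ord -mulr_natr.
have := normr_ge0 x; have := normr_ge0 B; have : 0 <= n%:R :> R by [].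
nra.
Qed.

Lemma jacobian_approx {F : 'rV[R]_n -> 'rV[R]_n} {a} {e : R} :
  differentiable F a -> 0 < e ->
  exists2 rho, 0 < rho & forall k, `|k| < rho ->
    `|F (k + a) - F a - k *m 'J F a| <= e * `|k|.
Proof.
move=> dF e0; have /eqaddoP /(_ e e0) := diff_locally dF.
move=> /nbhs_ballP [rho rho0 Frho]; exists rho => // k kr.
have := Frho k; rewrite -ball_normE /= sub0r normrN => /(_ kr).
by rewrite -deriveEjacobian // deriveE //= opprD addrA.
Qed.

Lemma closed_ball_rV_compact (a : 'rV[R]_n) (r : R) :
  0 < r -> compact (closed_ball a r).
Proof.
move=> r0; apply: bounded_closed_compact; last exact: closed_ball_closed.
exists (`|a| + r); split; first by rewrite realE addr_ge0 // ltW.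
move=> M Mr x; rewrite closed_ballE //= => ax.
have -> : x = a - (a - x) by rewrite opprB addrC subrK.
apply: le_trans (ltW Mr); apply: le_trans (ler_normB _ _) _.
by rewrite lerD2l.
Qed.

Lemma closed_sphere (a : 'rV[R]_n) (r : R) : closed [set x | `|a - x| = r].
Proof.
have -> : [set x | `|a - x| = r] = (fun x => `|a - x|) @^-1` [set r] by [].
apply: preimage_closed; last exact: closed_eq.
move=> x _; apply: continuous_comp; last exact: norm_continuous.
exact: (continuousB (@cst_continuous _ _ _ _)).
Qed.

End Calculus.

(* Inverting [F (d + a) - F a = d A + o(d)] with a bound [K] for [invmx A]
   first gives [|d| <= 2 K |F (d + a) - F a|], which turns the [o(d)] error
   into an [o(F (d + a) - F a)] one. *)
Lemma jacobian_inverse_approx {R : realType} {n : nat}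
    {F : 'rV[R]_n -> 'rV[R]_n} {a} {e : R} :
  differentiable F a -> 'J F a \in unitmx -> 0 < e ->
  exists2 rho, 0 < rho & forall d, `|d| < rho ->
    `|d - (F (d + a) - F a) *m invmx ('J F a)| <= e * `|F (d + a) - F a|.
Proof.
move=> dF Au e0; set A := 'J F a; set B := invmx A.
have [K K0 KB] := mulmx_norm_bound B.
set dl := Num.min (2 * K)^-1 (e / (2 * K ^+ 2)).
have K20 : 0 < 2 * K ^+ 2 by rewrite mulr_gt0 // exprn_gt0.
have dl0 : 0 < dl by rewrite lt_min invr_gt0 mulr_gt0 //= divr_gt0.
have Kdl : K * dl <= 2^-1.
  by rewrite -ler_pdivlMl // ge_min invfM mulrC lexx.
have K2dl : 2 * K ^+ 2 * dl <= e.
  by rewrite -ler_pdivlMl // mulrC ge_min lexx orbT.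
have [rho rho0 Frho] := jacobian_approx dF dl0.
exists rho => // d dr; set k := F (d + a) - F a.
have rd : `|k - d *m A| <= dl * `|d| by exact: Frho.
have dkB : d - k *m B = - ((k - d *m A) *m B).
  by rewrite [in RHS]mulmxBl /B mulmxK // opprB.
have errd : `|d - k *m B| <= K * (dl * `|d|).
  rewrite dkB normrN; apply: le_trans (KB _) _.
  by rewrite ler_wpM2l // ltW.
have dk : `|d| <= 2 * K * `|k|.
  have : `|d| <= K * `|k| + `|d - k *m B|.
    have {1}-> : d = k *m B + (d - k *m B) by rewrite addrC subrK.
    by apply: le_trans (ler_normD _ _) _; rewrite lerD2r.
  have := normr_ge0 d; nra.
apply: le_trans errd _; have := normr_ge0 d; have := normr_ge0 k; nra.
Qed.

Section InverseMap.
Variables (R : realType) (n : nat) (eta g : 'rV[R]_n -> 'rV[R]_n).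
Hypotheses (deta : forall z, differentiable eta z) (etaK : cancel eta g)
  (gK : cancel g eta) (etaJu : forall z, 'J eta z \in unitmx).

Let sqdist (u v : 'rV[R]_n) := dotv (u - v) (u - v).

(* Moving from [x] in the direction [u] solving [u J = y - eta x] makes
   [sqdist (eta (s u + x)) y] decrease at rate [2 sqdist (eta x) y]. *)
Lemma local_min_sqdist_eq x y (rho : R) : 0 < rho ->
  (forall x', `|x - x'| < rho -> sqdist (eta x) y <= sqdist (eta x') y) ->
  eta x = y.
Proof.
move=> rho0 xmin; set e := eta x - y; set J := 'J eta x.
set u := - (e *m invmx J); pose c (s : R) := eta (s *: u + x) - y.
have dc (s : R) : is_derive s 1 c (u *m 'J eta (s *: u + x) - 0).
  exact: is_deriveB (is_derive_jacobian (deta _) (is_derive_line u x s))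
    (is_derive_cst y s 1).
pose psi s := dotv (c s) (c s).
have dpsi (s : R) :
    is_derive s 1 psi (2 * dotv (c s) (u *m 'J eta (s *: u + x) - 0)).
  exact: is_derive_dotvv.
set r := rho / (`|u| + 1); have r0 : 0 < r by rewrite divr_gt0 // ltr_wpDl.
have psi'0 : is_derive (0 : R) 1 psi 0.
  apply: (@derive1_at_min _ psi (- r) r 0).
  - by rewrite ge0_cp // ltW.
  - by move=> s _; exact: (dpsi s).(ex_derive).
  - by rewrite in_itv /= oppr_lt0 r0.
  move=> s; rewrite in_itv /= => /andP[s1 s2].
  rewrite /psi /c scale0r add0r -/e; apply: xmin.
  rewrite opprD addrCA subrr addr0 normrN normrZ.
  have sr : `|s| < r by rewrite ltr_norml s1 s2.
  apply: (@le_lt_trans _ _ (`|s| * (`|u| + 1))).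
    by rewrite ler_wpM2l // lerDl.
  by rewrite -ltr_pdivlMr ?ltr_wpDl.
have := (dpsi 0).(derive_val); rewrite psi'0.(derive_val).
rewrite /c scale0r add0r -/e -/J subr0 /u mulNmx mulmxKV ?etaJu // dotvNr.
move=> /eqP; rewrite eq_sym mulf_eq0 pnatr_eq0 /= oppr_eq0 dotvv_eq0.
by rewrite subr_eq0 => /eqP.
Qed.

Let sqdistC u v : sqdist u v = sqdist v u.
Proof. by rewrite /sqdist -dotvvN opprB. Qed.

Let continuous_sqdist_eta y : continuous (fun x => sqdist (eta x) y).
Proof.
by move=> x; apply/differentiable_continuous/differentiable_dotvv/differentiableB.
Qed.

Lemma sphere_sqdist_gt0 y0 {r : R} : 0 < r ->
  exists2 m, 0 < m & forall x, `|g y0 - x| = r -> m <= sqdist (eta x) y0.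
Proof.
move=> r0; set S := [set x | `|g y0 - x| = r].
have cS : compact S.
  apply: (@subclosed_compact _ _ (closed_ball (g y0) r)).
  - exact: closed_sphere.
  - exact: closed_ball_rV_compact.
  by move=> x /= Sx; rewrite closed_ballE //= /closed_ball_ /= Sx.
have [[x0 Sx0]|S0] := pselect (S !=set0); last first.
  by exists 1 => // x Sx; exfalso; apply: S0; exists x.
have [c Sc cmin] := EVT_min_rV (ex_intro _ x0 Sx0) cS
  (continuous_subspaceT (continuous_sqdist_eta y0)).
exists (sqdist (eta c) y0); last by move=> x Sx; apply: cmin; rewrite inE.
rewrite dotvv_gt0 // subr_eq0; apply/eqP => etac.
by move: Sc r0; rewrite inE /S /= -etac etaK subrr normr0 => <-; rewrite ltxx.
Qed.

(* For [y] close to [y0], [sqdist (eta x) y] is small at the centre [g y0] of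
   the ball but not on its boundary sphere, so its minimum over the ball is
   attained inside, where [local_min_sqdist_eq] forces [eta x = y]. *)
Lemma inverse_continuous : continuous g.
Proof.
move=> y0; apply/(@cvgrPdist_lt _ _ _ _ (nbhs_filter y0)) => e e0; set a := g y0.
have r0 : 0 < e / 2 by rewrite divr_gt0.
have [m m0 mS] := sphere_sqdist_gt0 y0 r0.
have near_y0 : \forall y \near y0, sqdist y y0 < m / 4.
  have : {for y0, continuous (fun y => sqdist y y0)}.
    by apply/differentiable_continuous/differentiable_dotvv/differentiableB.
  move=> /(@cvgrPdist_lt _ _ _ _ (nbhs_filter y0)) /(_ (m / 4)).
  rewrite divr_gt0 // => /(_ isT) sq_near.
  apply: filterS sq_near => y; rewrite /sqdist subrr dotv0r sub0r normrN.
  exact: le_lt_trans (ler_norm _).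
apply: filterS near_y0 => y yy0.
have ball_a : closed_ball a (e / 2) !=set0 by exists a; exact: closed_ballxx.
have [x + xmin] := EVT_min_rV ball_a (closed_ball_rV_compact _ _ r0)
  (continuous_subspaceT (continuous_sqdist_eta y)).
rewrite inE closed_ballE //= => ax.
have {}xmin x' : `|a - x'| <= e / 2 -> sqdist (eta x) y <= sqdist (eta x') y.
  by move=> ax'; apply: xmin; rewrite inE closed_ballE.
have xa : `|a - x| < e / 2.
  rewrite lt_neqAle ax andbT; apply/eqP => /mS.
  have := dotvvD_le (eta x - y) (y - y0); rewrite addrA subrK.
  have := xmin a; rewrite subrr normr0 /a gK [sqdist y0 y]sqdistC.
  move=> /(_ (ltW r0)).
  by move: yy0; rewrite /sqdist; lra.
have <- : eta x = y.
  apply: (@local_min_sqdist_eq _ _ (e / 2 - `|a - x|)); first by rewrite subr_gt0.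
  move=> x' xx'; apply/xmin/ltW; apply: le_lt_trans (ler_distD x a x') _.
  by rewrite -ltrBrDl.
by rewrite etaK; apply: lt_trans xa _; rewrite ltr_pdivrMr // ltr_pMr // ltr1n.
Qed.

Lemma is_derive_inverse_line (w : 'rV[R]_n) (t : R) :
  is_derive t 1 (fun s : R => g (s *: w)) (w *m invmx ('J eta (g (t *: w)))).
Proof.
set y := t *: w; set a := g y; set v := w *m invmx ('J eta a).
suff gv : (fun h : R => h^-1 *: (g ((h *: 1 + t) *: w) - g y)) @ 0^' --> v.
  by apply: DeriveDef; [apply/cvg_ex; exists v | apply: cvg_lim].
apply/cvgrPdist_lt => e e0.
have w1 : 0 < `|w| + 1 by rewrite ltr_wpDl.
have e'0 : 0 < e / (`|w| + 1) by rewrite divr_gt0.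
have [rho rho0 approx] := jacobian_inverse_approx (deta a) (etaJu a) e'0.
have near_a : \forall h \near (0 : R), `|g (h *: w + y) - a| < rho.
  have : {for 0, continuous (fun h : R => g (h *: w + y))}.
    apply: continuous_comp.
      by apply: continuousD; [exact: scalel_continuous | exact: cst_continuous].
    by rewrite scale0r add0r; exact: inverse_continuous.
  move=> /cvgrPdist_lt /(_ rho rho0); rewrite scale0r add0r.
  by apply: filterS => h; rewrite distrC.
near=> h.
have h0 : h != 0 by near: h; exact: nbhs_dnbhs_neq.
have ha : `|g (h *: w + y) - a| < rho by near: h; exact: nbhs_dnbhs near_a.
have -> : (h *: 1 + t) *: w = h *: w + y by rewrite /y -scalerDl [h *: 1]mulr1.
set d := g (h *: w + y) - a.
have := approx d; rewrite subrK gK /a gK addrK => /(_ _) dw.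
have {}dw : `|d - h *: v| <= e / (`|w| + 1) * (`|h| * `|w|).
  by rewrite /v scalemxAl -normrZ; exact: dw.
have -> : v - h^-1 *: d = h^-1 *: (h *: v - d).
  by rewrite [RHS]scalerBr scalerA mulVf // scale1r.
rewrite normrZ distrC normfV -ltr_pdivlMl ?invr_gt0 ?normr_gt0 // invrK.
apply: le_lt_trans dw _.
rewrite mulrA [_ * `|h|]mulrC -mulrA ltr_pM2l ?normr_gt0 //.
by rewrite mulrAC ltr_pdivrMr // ltr_pM2l // ltrDl.
Unshelve. all: by end_near.
Qed.

End InverseMap.

Lemma dotv_le0_of_nsd_jacobian {R : realType} {n : nat}
    {eta f : 'rV[R]_n -> 'rV[R]_n} :
  (forall z, differentiable eta z) -> bijective eta ->
  (forall z, 'J eta z \in unitmx) -> (forall z, differentiable f z) ->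
  (forall z, nsd (Jac f z *m invmx (Jac eta z))) ->
  (forall z, eta z = 0 -> f z = 0) ->
  forall z, dotv (eta z) (f z) <= 0.
Proof.
move=> deta [g etaK gK] etaJu df nsdJ f0 z; set w := eta z.
pose phi (s : R) := dotv w (f (g (s *: w))).
have dphi (s : R) : is_derive s 1 phi
    (dotv w (w *m invmx ('J eta (g (s *: w))) *m 'J f (g (s *: w)))).
  apply: is_derive_dotv; apply: is_derive_jacobian (df _) _.
  exact: is_derive_inverse_line.
have phi'_le0 (s : R) : phi^`() s <= 0.
  by rewrite derive1E (dphi s).(derive_val); apply: dotv_nsd; exact: nsdJ.
have phi_cont : {within `[0, 1], continuous phi}.
  by apply: derivable_within_continuous => s _; exact: (dphi s).(ex_derive).
have := ler0_derive1_le_cc (fun s _ => (dphi s).(ex_derive)) (fun s _ => phi'_le0 s)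
  phi_cont.
move=> /(_ 1 0); rewrite !in_itv /= !lexx ler01 => /(_ isT isT isT).
by rewrite /phi scale1r /w etaK scale0r (f0 (g 0)) ?gK // dotv0r.
Qed.

Theorem mainTheorem3 (R : realType) (n : nat) (n_gt0 : (0 < n)%N)
  (H : 'rV[R]_n -> R) (eta f : 'rV[R]_n -> 'rV[R]_n)
  (HC1 : C1_scalar H) (Hge0 : forall z, 0 <= H z)
  (etaE : forall z, eta z = gradient H z) :
  (propertyA f eta <->
     exists M : 'rV[R]_n -> 'M[R]_n,
       forall z, (f z)^T = M z *m (eta z)^T /\ nsd (M z))
  /\
  (C1_map f -> C1_map eta -> bijective eta ->
   (forall z, eta z = 0 -> f z = 0) ->
   (forall z, Jac eta z \in unitmx) ->
   (forall z, nsd (Jac f z *m invmx (Jac eta z))) ->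
   propertyA f eta).
Proof.
split; first exact: propertyA_nsdP.
move=> [df _] [deta _] eta_bij f0 etaJu nsdJ; apply/propertyA_nsdP.
have etaJu' z : 'J eta z \in unitmx by rewrite -unitmx_tr; exact: etaJu.
have fle0 := dotv_le0_of_nsd_jacobian deta eta_bij etaJu' df nsdJ f0.
have [M fM] := boolp.choice (fun z => nsd_factor (fle0 z) (f0 z)).
by exists M.
Qed.
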